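(* Let $\Gamma$ be a reduct of $(\mathbb{Z};<)$ in which $\mathrm{suc}$ is primitive positive definable. Then $<$ is primitive positive definable in $\Gamma$ if and only if some one-sided infinite binary relation is primitive positive definable in $\Gamma$.
   Context: A reduct of $(\mathbb{Z};<)$ is a relational structure with domain $\mathbb{Z}$ whose relations are first-order definable in $(\mathbb{Z};<)$. $\mathrm{suc}=\{(x,y)\in\mathbb{Z}^2:y=x+1\}$. A binary relation $R$ first-order definable in $(\mathbb{Z};<)$ is one-sided infinite if there exist integers $c\le d$ such that for all $x\in\mathbb{Z}$: $(x,x+z)\notin R$ for every $z<c$, and $(x,x+z)\in R$ for every $z\ge d$. *)

From Stdlib Require Import ZArith List.
Import ListNotations.
Open Scope Z_scope.

Definition env := nat -> Z.
Definition upd (e : env) (x : nat) (z : Z) : env :=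
  fun i => if Nat.eqb i x then z else e i.

Inductive fo : Type :=
| FLt (i j : nat)
| FEq (i j : nat)
| FNot (p : fo)
| FAnd (p q : fo)
| FEx (x : nat) (p : fo).

Fixpoint fo_sat (e : env) (p : fo) : Prop :=
  match p with
  | FLt i j => e i < e j
  | FEq i j => e i = e j
  | FNot p => ~ fo_sat e p
  | FAnd p q => fo_sat e p /\ fo_sat e q
  | FEx x p => exists z, fo_sat (upd e x z) p
  end.

(* An n-ary relation on Z is represented as a predicate on lists of length n. *)
Definition relation_of_arity (n : nat) (R : list Z -> Prop) : Prop :=
  forall t, R t -> length t = n.

(* phi defines the n-ary relation R, with free variables 0..n-1
   (truth of phi may not depend on the values of other variables). *)
Definition defines {F : Type} (sat : env -> F -> Prop) (n : nat) (phi : F)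
  (R : list Z -> Prop) : Prop :=
  relation_of_arity n R /\
  forall (t : list Z) (e : env), length t = n ->
    (forall i, (i < n)%nat -> e i = nth i t 0) ->
    (R t <-> sat e phi).

Definition fo_definable (n : nat) (R : list Z -> Prop) : Prop :=
  exists phi : fo, defines fo_sat n phi R.

(* A reduct of (Z;<): a relational structure on Z, with arbitrary index set of
   relation symbols, each interpreted by a relation first-order definable in (Z;<). *)
Record reduct : Type := mkReduct {
  rI : Type;
  rar : rI -> nat;
  rrel : rI -> list Z -> Prop;
  rrel_arity : forall r, relation_of_arity (rar r) (rrel r);
  rrel_fo : forall r, fo_definable (rar r) (rrel r)
}.

Inductive pp (I : Type) : Type :=
| PTrue
| PEq (i j : nat)
| PAtom (r : I) (vs : list nat)
| PAnd (p q : pp I)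
| PEx (x : nat) (p : pp I).
Arguments PTrue {I}.
Arguments PEq {I} i j.
Arguments PAtom {I} r vs.
Arguments PAnd {I} p q.
Arguments PEx {I} x p.

Fixpoint pp_sat (G : reduct) (e : env) (p : pp (rI G)) : Prop :=
  match p with
  | PTrue => True
  | PEq i j => e i = e j
  | PAtom r vs => rrel G r (map e vs)
  | PAnd p q => pp_sat G e p /\ pp_sat G e q
  | PEx x p => exists z, pp_sat G (upd e x z) p
  end.

Fixpoint pp_wf (G : reduct) (p : pp (rI G)) : Prop :=
  match p with
  | PTrue => True
  | PEq _ _ => True
  | PAtom r vs => length vs = rar G r
  | PAnd p q => pp_wf G p /\ pp_wf G q
  | PEx _ p => pp_wf G p
  end.

Definition pp_definable (G : reduct) (n : nat) (R : list Z -> Prop) : Prop :=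
  exists phi : pp (rI G), pp_wf G phi /\ defines (pp_sat G) n phi R.

Definition lt_rel (t : list Z) : Prop := exists x y, t = [x; y] /\ x < y.
Definition suc_rel (t : list Z) : Prop := exists x, t = [x; x + 1].

Definition one_sided_infinite (R : list Z -> Prop) : Prop :=
  relation_of_arity 2 R /\ fo_definable 2 R /\
  exists c d : Z, c <= d /\
    forall x : Z,
      (forall z, z < c -> ~ R [x; x + z]) /\
      (forall z, d <= z -> R [x; x + z]).

From Stdlib Require Import ZArith List Lia Classical FunctionalExtensionality.
Import ListNotations.
Open Scope Z_scope.

(* Only the "if" direction has content.  A relation first-order definable in
   (Z;<) is invariant under translations, so a binary one is R(x,y) <-> D(y-x)
   for a set D of differences; one-sidedness makes D cofinal upwards and absent
   downwards, so D has a largest non-member g.  Using suc, every shift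
   y |-> y + k is pp-definable, hence so is the finite conjunction
   R(x, y + g + j) over 0 <= j <= g - c: it holds exactly when y - x > 0. *)

Definition rel2 (P : Z -> Z -> Prop) (t : list Z) : Prop :=
  exists x y, t = [x; y] /\ P x y.

Lemma rel2_pair P a b : rel2 P [a; b] <-> P a b.
Proof.
  split.
  - intros (x & y & Ht & Hp). injection Ht as -> ->. exact Hp.
  - intros Hp. exists a, b. auto.
Qed.

Lemma rel2_of_arity R :
  relation_of_arity 2 R -> forall t, R t <-> rel2 (fun x y => R [x; y]) t.
Proof.
  intros Har t. split.
  - intros Ht. pose proof (Har t Ht) as Hl.
    destruct t as [|a [|b [|]]]; try discriminate. exists a, b. auto.
  - intros (x & y & -> & Hr). exact Hr.
Qed.

Lemma pp_definable_ext G n A B :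
  (forall t, A t <-> B t) -> pp_definable G n A -> pp_definable G n B.
Proof.
  intros HAB [phi [Hwf [Har Hdef]]]. exists phi. split; [exact Hwf|]. split.
  - intros t Ht. apply Har, HAB, Ht.
  - intros t e Hl He. rewrite <- HAB. apply Hdef; assumption.
Qed.

Fixpoint pp_rename {I : Type} (f : nat -> nat) (p : pp I) : pp I :=
  match p with
  | PTrue => PTrue
  | PEq i j => PEq (f i) (f j)
  | PAtom r vs => PAtom r (map f vs)
  | PAnd p q => PAnd (pp_rename f p) (pp_rename f q)
  | PEx x p => PEx (f x) (pp_rename f p)
  end.

Lemma pp_wf_rename G f (p : pp (rI G)) : pp_wf G p -> pp_wf G (pp_rename f p).
Proof.
  induction p; simpl; try tauto.
  rewrite length_map. auto.
Qed.

Lemma pp_sat_rename G f (p : pp (rI G)) :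
  (forall a b, f a = f b -> a = b) ->
  forall e, pp_sat G e (pp_rename f p) <-> pp_sat G (fun i => e (f i)) p.
Proof.
  intros Hinj. induction p; intros e; simpl.
  - tauto.
  - tauto.
  - rewrite map_map. tauto.
  - rewrite IHp1, IHp2. tauto.
  - assert (Hupd : forall z, (fun i => upd e (f x) z (f i)) = upd (fun i => e (f i)) x z).
    { intros z. apply functional_extensionality. intros i. unfold upd.
      destruct (Nat.eqb_spec i x), (Nat.eqb_spec (f i) (f x)); subst; auto;
        exfalso; auto. }
    split; intros [z Hz]; exists z; [rewrite IHp, Hupd in Hz | rewrite IHp, Hupd]; exact Hz.
Qed.

(* Sends the free variables 0, 1 to a, b and every other variable above 3, so
   that two renamed formulas share no variable outside {0, 1, 2, 3}. *)
Definition rho (a b : nat) (i : nat) : nat :=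
  match i with O => a | S O => b | S (S k) => (k + 4)%nat end.

Lemma rho_inj a b :
  a <> b -> (a < 4)%nat -> (b < 4)%nat -> forall x y, rho a b x = rho a b y -> x = y.
Proof. intros Hab Ha Hb [|[|x]] [|[|y]]; simpl; lia. Qed.

Section BinaryPP.

Variable G : reduct.

Definition pp_definable2 (P : Z -> Z -> Prop) : Prop := pp_definable G 2 (rel2 P).

Lemma defines2_sat (phi : pp (rI G)) P :
  defines (pp_sat G) 2 phi (rel2 P) -> forall e, pp_sat G e phi <-> P (e 0%nat) (e 1%nat).
Proof.
  intros [_ Hdef] e. rewrite <- rel2_pair. symmetry.
  apply Hdef; [reflexivity|]. intros [|[|i]] Hi; simpl; auto; lia.
Qed.

Lemma pp_definable2_intro (phi : pp (rI G)) P :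
  pp_wf G phi -> (forall e, pp_sat G e phi <-> P (e 0%nat) (e 1%nat)) -> pp_definable2 P.
Proof.
  intros Hwf Hsat. exists phi. split; [exact Hwf|]. split.
  - intros t (x & y & -> & _). reflexivity.
  - intros t e Hl He. destruct t as [|a [|b [|]]]; try discriminate.
    rewrite Hsat, (He 0%nat), (He 1%nat) by (simpl; lia). apply rel2_pair.
Qed.

Lemma pp_definable2_ext P Q :
  pp_definable2 P -> (forall x y, P x y <-> Q x y) -> pp_definable2 Q.
Proof.
  intros [phi [Hwf Hdef]] HPQ. apply (pp_definable2_intro phi); [exact Hwf|].
  intros e. rewrite (defines2_sat phi P Hdef). apply HPQ.
Qed.

Lemma pp_definable2_eq : pp_definable2 (fun x y => x = y).
Proof. apply (pp_definable2_intro (PEq 0%nat 1%nat)); simpl; tauto. Qed.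

Lemma pp_definable2_and P Q :
  pp_definable2 P -> pp_definable2 Q -> pp_definable2 (fun x y => P x y /\ Q x y).
Proof.
  intros [phi [Hwf Hdef]] [psi [Hwf' Hdef']].
  apply (pp_definable2_intro (PAnd phi psi)); [simpl; auto|].
  intros e. simpl. rewrite (defines2_sat phi P Hdef), (defines2_sat psi Q Hdef'). tauto.
Qed.

Lemma pp_definable2_converse P : pp_definable2 P -> pp_definable2 (fun x y => P y x).
Proof.
  intros [phi [Hwf Hdef]].
  apply (pp_definable2_intro (pp_rename (rho 1 0) phi)); [apply pp_wf_rename, Hwf|].
  intros e. rewrite pp_sat_rename by (apply rho_inj; lia).
  rewrite (defines2_sat phi P Hdef). reflexivity.
Qed.

Lemma pp_definable2_comp P Q :
  pp_definable2 P -> pp_definable2 Q ->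
  pp_definable2 (fun x z => exists y, P x y /\ Q y z).
Proof.
  intros [phi [Hwf Hdef]] [psi [Hwf' Hdef']].
  apply (pp_definable2_intro
           (PEx 2 (PAnd (pp_rename (rho 0 2) phi) (pp_rename (rho 2 1) psi)))).
  { simpl. split; apply pp_wf_rename; assumption. }
  intros e. simpl.
  setoid_rewrite pp_sat_rename; try (apply rho_inj; lia).
  setoid_rewrite (defines2_sat phi P Hdef). setoid_rewrite (defines2_sat psi Q Hdef').
  reflexivity.
Qed.

Lemma pp_definable2_forall_le (P : nat -> Z -> Z -> Prop) :
  (forall j, pp_definable2 (P j)) ->
  forall n, pp_definable2 (fun x y => forall j, (j <= n)%nat -> P j x y).
Proof.
  intros HP n. induction n as [|n IH].
  - eapply pp_definable2_ext; [exact (HP 0%nat)|].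
    intros x y. split; [intros H j Hj; replace j with 0%nat by lia; exact H|].
    intros H. apply H. lia.
  - eapply pp_definable2_ext; [exact (pp_definable2_and _ _ IH (HP (S n)))|].
    intros x y. split.
    + intros [Hle HSn] j Hj. destruct (Nat.eq_dec j (S n)) as [->|]; [exact HSn|].
      apply Hle. lia.
    + intros H. split; [intros j Hj|]; apply H; lia.
Qed.

Hypothesis suc_pp : pp_definable2 (fun x y => y = x + 1).

Lemma pp_definable2_add_nat (n : nat) : pp_definable2 (fun x y => y = x + Z.of_nat n).
Proof.
  induction n as [|n IH].
  - eapply pp_definable2_ext; [exact pp_definable2_eq|]. intros x y; cbn beta; lia.
  - eapply pp_definable2_ext; [exact (pp_definable2_comp _ _ IH suc_pp)|].
    intros x y. split; [intros (w & H1 & H2); lia|].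
    intros H. exists (x + Z.of_nat n). lia.
Qed.

Lemma pp_definable2_add (k : Z) : pp_definable2 (fun x y => y = x + k).
Proof.
  destruct (Z_le_gt_dec 0 k).
  - eapply pp_definable2_ext; [exact (pp_definable2_add_nat (Z.to_nat k))|].
    intros x y; cbn beta; lia.
  - eapply pp_definable2_ext;
      [exact (pp_definable2_converse _ (pp_definable2_add_nat (Z.to_nat (- k))))|].
    intros x y; cbn beta; lia.
Qed.

Lemma pp_definable2_shift_r P (k : Z) :
  pp_definable2 P -> pp_definable2 (fun x y => P x (y + k)).
Proof.
  intros HP.
  eapply pp_definable2_ext; [exact (pp_definable2_comp _ _ HP (pp_definable2_add (- k)))|].
  intros x y. split.
  - intros (w & Hw & ->). replace (w + - k + k) with w by lia. exact Hw.
  - intros H. exists (y + k). split; [exact H | lia].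
Qed.

End BinaryPP.

Lemma fo_sat_translate p : forall e k, fo_sat e p <-> fo_sat (fun i => e i + k) p.
Proof.
  induction p as [i j|i j|p IH|p IHp q IHq|x p IH]; intros e k; simpl.
  - lia.
  - lia.
  - rewrite (IH e k). reflexivity.
  - rewrite (IHp e k), (IHq e k). reflexivity.
  - assert (Hupd : forall z, (fun i => upd e x z i + k) = upd (fun i => e i + k) x (z + k)).
    { intros z. apply functional_extensionality. intros i. unfold upd.
      destruct (Nat.eqb i x); reflexivity. }
    split; intros [z Hz].
    + exists (z + k). rewrite <- Hupd, <- IH. exact Hz.
    + exists (z - k). rewrite IH, Hupd. replace (z - k + k) with z by lia. exact Hz.
Qed.

Lemma fo_definable_translate n R :
  fo_definable n R -> forall t k, R t <-> R (map (fun z => z + k) t).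
Proof.
  intros [phi [Har Hdef]] t k.
  destruct (Nat.eq_dec (length t) n) as [Hl|Hl].
  2: { split; intros Ht; apply Har in Ht; [|rewrite length_map in Ht]; contradiction. }
  rewrite (Hdef t (fun i => nth i t 0)) by auto.
  rewrite (Hdef (map (fun z => z + k) t) (fun i => nth i t 0 + k)).
  - apply fo_sat_translate.
  - rewrite length_map. exact Hl.
  - intros i Hi. symmetry.
    rewrite (nth_indep _ 0 ((fun z => z + k) 0)) by (rewrite length_map; lia).
    exact (map_nth (fun z => z + k) t 0 i).
Qed.

Lemma fo_definable2_diff R :
  fo_definable 2 R -> forall x y, R [x; y] <-> R [0; y - x].
Proof.
  intros Hfo x y. rewrite (fo_definable_translate 2 R Hfo [x; y] (- x)). simpl.
  replace (x + - x) with 0 by lia. replace (y + - x) with (y - x) by lia. reflexivity.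
Qed.

Lemma ex_largest_non_member (D : Z -> Prop) d z0 :
  (forall z, d <= z -> D z) -> ~ D z0 -> exists g, ~ D g /\ forall w, g < w -> D w.
Proof.
  intros Hd.
  assert (Hm : forall m : nat, forall z, ~ D z -> d - z <= Z.of_nat m ->
            exists g, ~ D g /\ forall w, g < w -> D w).
  { induction m as [|m IH]; intros z Hz Hm.
    - exfalso. apply Hz, Hd. lia.
    - destruct (classic (exists w, z < w /\ ~ D w)) as [(w & Hzw & Hw)|Hnone].
      + apply (IH w Hw). destruct (Z_lt_le_dec w d); [lia|].
        exfalso. apply Hw, Hd. lia.
      + exists z. split; [exact Hz|]. intros w Hw. apply NNPP. intros HDw.
        apply Hnone. eauto. }
  intros Hz0. apply (Hm (Z.to_nat (d - z0)) z0 Hz0). lia.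
Qed.

(* For z <= 0 the window [z + g, z + g + N] either contains the gap g or
   starts below c, because N >= g - c. *)
Lemma pos_iff_window (D : Z -> Prop) c g (N : nat) :
  (forall w, w < c -> ~ D w) -> ~ D g -> (forall w, g < w -> D w) -> g - c <= Z.of_nat N ->
  forall z, 0 < z <-> forall j, (j <= N)%nat -> D (z + g + Z.of_nat j).
Proof.
  intros Hlow Hg Habove HN z. split.
  - intros Hz j _. apply Habove. lia.
  - intros Hwin. destruct (Z_lt_le_dec 0 z) as [|Hz]; [assumption|exfalso].
    destruct (Z_le_gt_dec (- z) (Z.of_nat N)).
    + apply Hg. replace g with (z + g + Z.of_nat (Z.to_nat (- z))) by lia.
      apply Hwin. lia.
    + apply (Hlow (z + g)); [lia|]. replace (z + g) with (z + g + Z.of_nat 0) by lia.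
      apply Hwin. lia.
Qed.

Lemma lt_rel_one_sided_infinite : one_sided_infinite lt_rel.
Proof.
  split; [intros t (x & y & -> & _); reflexivity|]. split.
  - exists (FLt 0 1). split; [intros t (x & y & -> & _); reflexivity|].
    intros t e Hl He. destruct t as [|a [|b [|]]]; try discriminate.
    simpl. rewrite (He 0%nat), (He 1%nat) by lia. apply rel2_pair.
  - exists 1, 1. split; [lia|]. intros x. split.
    + intros z Hz Hlt. apply rel2_pair in Hlt. lia.
    + intros z Hz. apply rel2_pair. lia.
Qed.

Lemma pp_definable_lt_of_one_sided_infinite G R :
  pp_definable2 G (fun x y => y = x + 1) ->
  one_sided_infinite R -> pp_definable G 2 R -> pp_definable G 2 lt_rel.
Proof.
  intros Hsuc [Har [Hfo (c & d & _ & Hcd)]] HR.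
  set (D := fun z => R [0; z]).
  assert (Hlow : forall w, w < c -> ~ D w) by (intros w; apply (proj1 (Hcd 0))).
  assert (Hhigh : forall w, d <= w -> D w) by (intros w; apply (proj2 (Hcd 0))).
  destruct (ex_largest_non_member D d (c - 1) Hhigh (Hlow (c - 1) ltac:(lia)))
    as (g & Hg & Habove).
  set (N := Z.to_nat (g - c)).
  assert (HR2 : pp_definable2 G (fun x y => R [x; y]))
    by exact (pp_definable_ext G 2 _ _ (rel2_of_arity R Har) HR).
  eapply pp_definable2_ext.
  { apply (pp_definable2_forall_le G (fun j x y => R [x; y + (g + Z.of_nat j)])).
    intros j. exact (pp_definable2_shift_r G Hsuc _ _ HR2). }
  intros x y.
  assert (Hdiff : forall j : nat, R [x; y + (g + Z.of_nat j)] <-> D (y - x + g + Z.of_nat j)).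
  { intros j. unfold D. rewrite (fo_definable2_diff R Hfo).
    replace (y + (g + Z.of_nat j) - x) with (y - x + g + Z.of_nat j) by lia. reflexivity. }
  cbn beta. setoid_rewrite Hdiff.
  rewrite <- (pos_iff_window D c g N Hlow Hg Habove ltac:(lia) (y - x)). lia.
Qed.

Theorem mainTheorem13 (G : reduct) :
  pp_definable G 2 suc_rel ->
  (pp_definable G 2 lt_rel <->
   exists R : list Z -> Prop, one_sided_infinite R /\ pp_definable G 2 R).
Proof.
  intros Hsuc.
  assert (Hsuc2 : pp_definable2 G (fun x y => y = x + 1)).
  { eapply pp_definable_ext; [|exact Hsuc]. intros t. split.
    - intros [x ->]. apply rel2_pair. reflexivity.
    - intros (x & y & -> & ->). exists x. reflexivity. }
  split.
  - intros Hlt. exists lt_rel. split; [exact lt_rel_one_sided_infinite | exact Hlt].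
  - intros (R & HosiR & HR). exact (pp_definable_lt_of_one_sided_infinite G R Hsuc2 HosiR HR).
Qed.
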